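(* Let $0\le a<b$ and $1<\alpha\le 2$. Define $G:[a,b]\times[a,b]\to\mathbb{R}$ by $$G(t,s)=\begin{cases}\dfrac{b-t}{b-a}\big[(\alpha-1)(s-a)-2+\alpha\big], & a\le s\le t\le b,\\[2mm] \dfrac{t-a}{b-a}\big[(\alpha-1)(b-s)+2-\alpha\big], & a\le t\le s\le b.\end{cases}$$ Then: (i) if $b-a<\frac{2-\alpha}{\alpha-1}$, then $\displaystyle\max_{(t,s)\in[a,b]\times[a,b]}|G(t,s)|=2-\alpha$; (ii) if $b-a\ge\frac{2-\alpha}{\alpha-1}$, then $\displaystyle\max_{(t,s)\in[a,b]\times[a,b]}|G(t,s)|=\frac{[(\alpha-1)(b-a)+(2-\alpha)]^2}{4(\alpha-1)(b-a)}$.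
   Context: The function $G$ is the Green's function of the boundary value problem ${}^{CF}D_a^{\alpha}u(t)+q(t)u(t)=0$, $a<t<b$, $u(a)=u(b)=0$, with the Caputo–Fabrizio derivative of order $\alpha$; the statement itself only concerns the explicitly defined function $G$. *)

From Stdlib Require Import Reals.
Open Scope R_scope.

(* Green's function of the Caputo-Fabrizio BVP. On the diagonal s = t the two
   formulas of the paper differ (by 2 - alpha); we use the second one
   (case a <= t <= s <= b) there. *)
Definition G (a b alpha t s : R) : R :=
  if Rle_dec t s
  then (t - a) / (b - a) * ((alpha - 1) * (b - s) + 2 - alpha)
  else (b - t) / (b - a) * ((alpha - 1) * (s - a) - 2 + alpha).

Definition is_max_absG (a b alpha M : R) : Prop :=
  (exists t s, a <= t <= b /\ a <= s <= b /\ Rabs (G a b alpha t s) = M) /\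
  (forall t s, a <= t <= b -> a <= s <= b -> Rabs (G a b alpha t s) <= M).

(* On the diagonal, G t t = (t - a) ((alpha - 1) (b - t) + 2 - alpha) / (b - a)
   is a concave quadratic in t, and every value of |G| is dominated by a
   diagonal value: for t <= s by G t t itself, for s < t by the diagonal value
   at the reflected point a + b - t.  So the maximum of |G| is the maximum of
   this parabola on [a, b]: its value G b b = 2 - alpha at the endpoint when
   the vertex lies beyond b, i.e. when (alpha - 1) (b - a) < 2 - alpha, and its
   value at the vertex otherwise. *)

From Stdlib Require Import Reals Lra Psatz.
From Coquelicot Require Import Rcomplements.
Open Scope R_scope.

Lemma G_diag (a b alpha x : R) :
  G a b alpha x x = (x - a) / (b - a) * ((alpha - 1) * (b - x) + 2 - alpha).
Proof.
  unfold G. destruct (Rle_dec x x) as [_ | Hxx]; [reflexivity | lra].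
Qed.

Section GreenFunction.

Variables a b alpha : R.
Hypothesis Hab : a < b.
Hypothesis Hal1 : 1 < alpha.
Hypothesis Hal2 : alpha <= 2.

Lemma Rabs_G_le_diag_upper (t s : R) :
  a <= t <= s -> s <= b -> Rabs (G a b alpha t s) <= G a b alpha t t.
Proof.
  intros Ht Hs. unfold G.
  destruct (Rle_dec t s) as [_ | Hts]; [| lra].
  destruct (Rle_dec t t) as [_ | Htt]; [| lra].
  assert (Hk : 0 <= (t - a) / (b - a)) by (apply Rdiv_le_0_compat; lra).
  rewrite Rabs_pos_eq by (apply Rmult_le_pos; nra).
  apply Rmult_le_compat_l; nra.
Qed.

Lemma Rabs_G_le_diag_lower (t s : R) :
  a <= s < t -> t <= b ->
  Rabs (G a b alpha t s) <= G a b alpha (a + b - t) (a + b - t).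
Proof.
  intros Hs Ht. unfold G.
  destruct (Rle_dec t s) as [Hts | _]; [lra |].
  destruct (Rle_dec (a + b - t) (a + b - t)) as [_ | Htt]; [| lra].
  replace (a + b - t - a) with (b - t) by ring.
  replace (b - (a + b - t)) with (t - a) by ring.
  assert (Hk : 0 <= (b - t) / (b - a)) by (apply Rdiv_le_0_compat; lra).
  rewrite Rabs_mult, (Rabs_pos_eq _ Hk).
  apply Rmult_le_compat_l; [exact Hk |].
  apply Rabs_le. split; nra.
Qed.

Lemma Rabs_G_le_of_diag (M : R) :
  (forall x, a <= x <= b -> G a b alpha x x <= M) ->
  forall t s, a <= t <= b -> a <= s <= b -> Rabs (G a b alpha t s) <= M.
Proof.
  intros Hdiag t s Ht Hs.
  destruct (Rle_lt_dec t s) as [Hts | Hst].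
  - apply Rle_trans with (G a b alpha t t).
    + apply Rabs_G_le_diag_upper; lra.
    + apply Hdiag; lra.
  - apply Rle_trans with (G a b alpha (a + b - t) (a + b - t)).
    + apply Rabs_G_le_diag_lower; lra.
    + apply Hdiag; lra.
Qed.

Lemma is_max_absG_of_diag (x0 : R) :
  a <= x0 <= b ->
  (forall x, a <= x <= b -> G a b alpha x x <= G a b alpha x0 x0) ->
  is_max_absG a b alpha (G a b alpha x0 x0).
Proof.
  intros Hx0 Hdiag. split.
  - exists x0, x0. split; [exact Hx0 |]. split; [exact Hx0 |].
    apply Rle_antisym.
    + apply Rabs_G_le_diag_upper; lra.
    + apply Rle_abs.
  - exact (Rabs_G_le_of_diag _ Hdiag).
Qed.

Lemma G_diag_b : G a b alpha b b = 2 - alpha.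
Proof.
  rewrite G_diag. field. lra.
Qed.

Lemma G_diag_le_b (x : R) :
  (b - a) * (alpha - 1) <= 2 - alpha -> a <= x <= b ->
  G a b alpha x x <= G a b alpha b b.
Proof.
  intros Hsmall Hx. rewrite G_diag_b, G_diag, <- Rmult_div_swap.
  apply Rle_div_l; [lra |].
  assert (0 <= (b - x) * ((2 - alpha) - (alpha - 1) * (x - a)))
    by (apply Rmult_le_pos; nra).
  nra.
Qed.

Definition diag_vertex : R :=
  a + ((alpha - 1) * (b - a) + (2 - alpha)) / (2 * (alpha - 1)).

Lemma diag_vertex_mem :
  2 - alpha <= (b - a) * (alpha - 1) -> a <= diag_vertex <= b.
Proof.
  intros Hlarge. unfold diag_vertex. split.
  - assert (0 <= ((alpha - 1) * (b - a) + (2 - alpha)) / (2 * (alpha - 1)))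
      by (apply Rdiv_le_0_compat; nra).
    lra.
  - assert (((alpha - 1) * (b - a) + (2 - alpha)) / (2 * (alpha - 1)) <= b - a)
      by (apply Rle_div_l; lra).
    lra.
Qed.

Lemma G_diag_vertex :
  G a b alpha diag_vertex diag_vertex
  = ((alpha - 1) * (b - a) + (2 - alpha)) ^ 2 / (4 * (alpha - 1) * (b - a)).
Proof.
  rewrite G_diag. unfold diag_vertex. field. lra.
Qed.

Lemma G_diag_le_vertex (x : R) :
  G a b alpha x x <= G a b alpha diag_vertex diag_vertex.
Proof.
  rewrite G_diag_vertex, G_diag.
  apply (Rle_div_r _ _ (4 * (alpha - 1) * (b - a))).
  { apply Rmult_lt_0_compat; lra. }
  (* completing the square around the vertex *)
  replace ((x - a) / (b - a) * ((alpha - 1) * (b - x) + 2 - alpha)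
             * (4 * (alpha - 1) * (b - a)))
    with (((alpha - 1) * (b - a) + (2 - alpha)) ^ 2
          - (2 * (alpha - 1) * (x - a) - ((alpha - 1) * (b - a) + (2 - alpha))) ^ 2)
    by (field; lra).
  assert (0 <= (2 * (alpha - 1) * (x - a)
                - ((alpha - 1) * (b - a) + (2 - alpha))) ^ 2) by apply pow2_ge_0.
  lra.
Qed.

End GreenFunction.

Theorem proposition1 (a b alpha : R)
  (Ha : 0 <= a) (Hab : a < b) (Hal1 : 1 < alpha) (Hal2 : alpha <= 2) :
  (b - a < (2 - alpha) / (alpha - 1) ->
     is_max_absG a b alpha (2 - alpha)) /\
  (b - a >= (2 - alpha) / (alpha - 1) ->
     is_max_absG a b alpha
       (((alpha - 1) * (b - a) + (2 - alpha)) ^ 2 / (4 * (alpha - 1) * (b - a)))).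
Proof.
  split; intro Hlen.
  - apply Rlt_div_r in Hlen; [| lra].
    rewrite <- (G_diag_b a b alpha Hab).
    apply is_max_absG_of_diag; try lra.
    intros x Hx. apply G_diag_le_b; lra.
  - apply Rge_le, Rle_div_l in Hlen; [| lra].
    rewrite <- (G_diag_vertex a b alpha Hab Hal1).
    apply is_max_absG_of_diag; try lra.
    + apply diag_vertex_mem; lra.
    + intros x _. apply G_diag_le_vertex; lra.
Qed.
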